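(* Let $\mathcal{D}$ be a distribution over $\mathcal{X}\times\mathcal{Y}$ where $\mathcal{Y}\subseteq\mathbb{R}^d$ and $\|y\|_\infty\le M$ for all $y\in\mathcal{Y}$, let $\alpha>0$, and let $\mathcal{T}$ be a bucketing with width $w=\sqrt{\alpha/M}$. Let $\pi:\mathcal{X}\to\Omega$ be an arbitrary policy and let $h:\mathcal{X}\to\mathcal{Y}$ be a model that is $\alpha$-consistent with respect to $\pi$. Then \[\left|\mathbb{E}_{\mathcal{D}}[\pi(x)\cdot h(x)]-\mathbb{E}_{\mathcal{D}}[\pi(x)\cdot y]\right|\le 2d\sqrt{\alpha M}.\]
   Context: $\Omega\subseteq[0,1]^d$ is an arbitrary (not necessarily convex) feasible set of actions; a policy is a map $\pi:\mathcal{X}\to\Omega$; a model is a map $h:\mathcal{X}\to\mathcal{Y}$. A bucketing $\mathcal{T}$ of width $w$ is a partition of $[0,1]$ into $1/w$ consecutive intervals (''buckets'') $\tau$ of width $w$. A model $h$ is $\alpha$-consistent with respect to a collection of sets $\mathcal{C}\subseteq 2^{\mathcal{X}}$ if for every $C\in\mathcal{C}$, $\|\mathbb{E}_{\mathcal{D}}[y-h(x)\mid x\in C]\|_\infty\le \alpha/\Pr[x\in C]$. The level sets of a policy $\pi$ are $\mathcal{C}^{\mathcal{T}}_\pi=\{\{x:\pi(x)_i\in\tau\}: i\in[d],\tau\in\mathcal{T}\}$. A model $h$ is $\alpha$-consistent with respect to a policy $\pi$ if it is $\alpha$-consistent with respect to $\mathcal{C}^{\mathcal{T}}_\pi$. 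*)

From HB Require Import structures.
From mathcomp Require Import all_boot all_order all_algebra.
From mathcomp Require Import all_classical all_reals all_analysis.
Set Implicit Arguments. Unset Strict Implicit. Unset Printing Implicit Defensive.
Import Order.TTheory GRing.Theory Num.Theory.
Import numFieldNormedType.Exports.
Local Open Scope classical_set_scope.
Local Open Scope ring_scope.

(* A bucketing of width w of [0,1]: n = 1/w consecutive intervals tau_k
   (k < n) of width w, tau_k lying between k*w and (k+1)*w (endpoint
   conventions left arbitrary), pairwise disjoint and covering [0,1]. *)
Definition is_bucketing (R : realType) (w : R) (n : nat) (tau : 'I_n -> set R) :
  Prop :=
  [/\ n%:R * w = 1,
      (forall k : 'I_n,
          [set u | k%:R * w < u < k.+1%:R * w] `<=` tau k /\
          tau k `<=` [set u | k%:R * w <= u <= k.+1%:R * w]),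
      (forall k l : 'I_n, k != l -> tau k `&` tau l = set0) &
      \bigcup_(k in [set: 'I_n]) tau k = [set u | 0 <= u <= 1]].

Definition level_sets (R : realType) (X : Type) (d n : nat)
  (tau : 'I_n -> set R) (pi : X -> 'rV[R]_d) : set (set X) :=
  [set C | exists (i : 'I_d) (k : 'I_n), C = [set x | tau k (pi x 0 i)]].

Definition cond_exp (R : realType) (dT : measure_display) (T : measurableType dT)
  (P : probability T R) (A : set T) (f : T -> R) : R :=
  fine (\int[P]_(t in A) (f t)%:E) / fine (P A).

(* (x,y) ~ D is modelled as a pair of random variables xf, yf on the
   probability space (T, P).  h is alpha-consistent w.r.t. the collection Cs:
   for every C in Cs, || E[y - h(x) | x in C] ||_inf <= alpha / Pr[x in C]. *)
Definition alpha_consistent (R : realType) (dT : measure_display)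
  (T : measurableType dT) (P : probability T R) (X : Type) (d : nat)
  (xf : T -> X) (yf : T -> 'rV[R]_d) (h : X -> 'rV[R]_d) (alpha : R)
  (Cs : set (set X)) : Prop :=
  forall C, Cs C -> forall i : 'I_d,
    `| cond_exp P (xf @^-1` C) (fun t => yf t 0 i - h (xf t) 0 i) |
      <= alpha / fine (P (xf @^-1` C)).

Definition dotv (R : realType) (d : nat) (u v : 'rV[R]_d) : R :=
  \sum_(i < d) u 0 i * v 0 i.

(* On coordinate i, let the level sets of pi_i partition the sample space:
   where pi_i(x) lies in bucket k it is within w/2 of the bucket midpoint c_k.
   So E[pi_i (y_i - h_i)] is the sum over k of c_k E[(y_i - h_i) 1_(level set k)],
   each term at most alpha in absolute value by alpha-consistency and
   |c_k| <= 1, plus a rounding error of at most (w/2)(2M).  With n = 1/w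
   buckets this is n alpha + w M = 2 sqrt(alpha M); sum over the d coordinates. *)

From HB Require Import structures.
From mathcomp Require Import all_boot all_order all_algebra.
From mathcomp Require Import all_classical all_reals all_analysis.
From mathcomp Require Import measurable_realfun ring lra.
Set Implicit Arguments. Unset Strict Implicit. Unset Printing Implicit Defensive.
Import Order.TTheory GRing.Theory Num.Theory.
Import numFieldNormedType.Exports.
Local Open Scope classical_set_scope.
Local Open Scope ring_scope.

Lemma measurable_itv_sandwich (R : realType) (a b : R) (S : set R) :
  [set u | a < u < b] `<=` S -> S `<=` [set u | a <= u <= b] -> measurable S.
Proof.
move=> oS Sc.
have measurable_setI1 x : measurable (S `&` [set x]).
  by have [->|->] := subset_set1 (@subIsetr _ S [set x]); [|exact: measurable_set1].
have -> : S = [set u | a < u < b] `|` (S `&` [set a]) `|` (S `&` [set b]).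
  apply/seteqP; split=> [u Su|u [[/oS|[]]|[]] //].
  have /andP[] := Sc u Su; rewrite !le_eqVlt.
  move=> /predU1P[au _|au /predU1P[ub|ub]].
  - by left; right; split=> //; rewrite au.
  - by right; split.
  - by left; left; rewrite /= au ub.
by apply: measurableU; [apply: measurableU; [rewrite -set_itvoo|]|].
Qed.

Lemma sum_indic_partition (T : Type) (R : pzRingType) (n : nat)
    (A : 'I_n -> set T) (k0 : 'I_n) (t : T) (F : 'I_n -> R) :
  (forall k l, k != l -> A k `&` A l = set0) -> A k0 t ->
  \sum_k F k * \1_(A k) t = F k0.
Proof.
move=> disjA Ak0t; rewrite (bigD1 k0) //= indicE mem_set // mulr1.
rewrite big1 ?addr0 // => k kk0; rewrite indicE memNset ?mulr0 // => Akt.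
by have := disjA k0 k; rewrite eq_sym kk0 => /(_ isT) /seteqP[/(_ t (conj Ak0t Akt))].
Qed.

Section BoundedMeasurable.
Context d (T : measurableType d) (R : realType).
Implicit Types f g : T -> R.

Lemma measurable_preimageT f (Y : set R) :
  measurable_fun setT f -> measurable Y -> measurable (f @^-1` Y).
Proof. by move=> mf mY; rewrite -[_ @^-1` _]setTI; exact: mf. Qed.

Definition bounded_measurable f :=
  measurable_fun setT f /\ exists B : R, forall t, `|f t| <= B.

Lemma bounded_measurable_cst (c : R) : bounded_measurable (fun _ => c).
Proof. by split; [exact: measurable_cst | exists `|c|]. Qed.

Lemma bounded_measurable_indic (A : set T) :
  measurable A -> bounded_measurable (\1_A).
Proof.
move=> mA; split; first exact: measurable_indic.
by exists 1 => t; rewrite indicE; case: (t \in A); rewrite ?normr1 ?normr0.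
Qed.

Lemma bounded_measurableD f g : bounded_measurable f -> bounded_measurable g ->
  bounded_measurable (fun t => f t + g t).
Proof.
move=> [mf [Bf fB]] [mg [Bg gB]]; split; first exact: measurable_funD.
by exists (Bf + Bg) => t; apply: le_trans (ler_normD _ _) (lerD (fB t) (gB t)).
Qed.

Lemma bounded_measurableM f g : bounded_measurable f -> bounded_measurable g ->
  bounded_measurable (fun t => f t * g t).
Proof.
move=> [mf [Bf fB]] [mg [Bg gB]]; split; first exact: measurable_funM.
by exists (Bf * Bg) => t; rewrite normrM ler_pM.
Qed.

Lemma bounded_measurableB f g : bounded_measurable f -> bounded_measurable g ->
  bounded_measurable (fun t => f t - g t).
Proof.
move=> bf bg; have := bounded_measurableD bf
  (bounded_measurableM (bounded_measurable_cst (-1)) bg).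
by congr bounded_measurable; apply/funext => t; rewrite mulN1r.
Qed.

Lemma bounded_measurable_norm f :
  bounded_measurable f -> bounded_measurable (fun t => `|f t|).
Proof.
move=> [mf [B fB]]; split; first exact: measurableT_comp mf.
by exists B => t; rewrite normr_id.
Qed.

Lemma bounded_measurable_sum (I : Type) (s : seq I) (F : I -> T -> R) :
  (forall i, bounded_measurable (F i)) ->
  bounded_measurable (fun t => \sum_(i <- s) F i t).
Proof.
move=> bF; elim: s => [|i s IHs].
  by under eq_fun do rewrite big_nil; exact: bounded_measurable_cst.
by under eq_fun do rewrite big_cons; exact: bounded_measurableD.
Qed.

End BoundedMeasurable.

Section ProbabilityIntegrals.
Context d (T : measurableType d) (R : realType) (P : probability T R).
Implicit Types f g : T -> R.

Lemma bounded_measurable_integrable f :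
  bounded_measurable f -> P.-integrable setT (EFin \o f).
Proof.
move=> [mf [B fB]]; apply: measurable_bounded_integrable => //.
  exact: le_lt_trans (probability_le1 P measurableT) (ltry 1).
by exists B; split=> [|x Bx t _]; [rewrite num_real | apply: le_trans (fB t) (ltW Bx)].
Qed.

Lemma integral_EFin_Rintegral f : bounded_measurable f ->
  (\int[P]_t (f t)%:E)%E = (\int[P]_t f t)%:E.
Proof.
by move=> bf; rewrite fineK //; exact/integrable_fin_num/bounded_measurable_integrable.
Qed.

Lemma Rintegral_sum (I : Type) (s : seq I) (F : I -> T -> R) :
  (forall i, bounded_measurable (F i)) ->
  \int[P]_t (\sum_(i <- s) F i t) = \sum_(i <- s) \int[P]_t F i t.
Proof.
move=> bF; apply: EFin_inj; rewrite -integral_EFin_Rintegral; last first.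
  exact: bounded_measurable_sum.
under eq_integral do rewrite -sumEFin.
rewrite integral_sum //; last by move=> i; exact: bounded_measurable_integrable.
rewrite -sumEFin; apply: eq_bigr => i _; exact: integral_EFin_Rintegral.
Qed.

Lemma Rintegral_mul_indic (A : set T) f :
  \int[P]_t (f t * \1_A t) = \int[P]_(t in A) f t.
Proof. by rewrite [RHS]Rintegral_mkcond patch_indic. Qed.

Lemma normr_Rintegral_le f (B : R) : bounded_measurable f ->
  (forall t, `|f t| <= B) -> `|\int[P]_t f t| <= B.
Proof.
move=> bf fB; apply: le_trans (le_normr_Rintegral _ _) _ => //.
  exact: bounded_measurable_integrable.
apply: le_trans (le_Rintegral (f2 := fun=> B) _ _ _ _) _ => //.
- exact/bounded_measurable_integrable/bounded_measurable_norm.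
- exact/bounded_measurable_integrable/bounded_measurable_cst.
- by rewrite Rintegral_cst //; have /= -> := probability_setT P; rewrite mulr1.
Qed.

Lemma normr_Rintegral_le_of_cond_exp (A : set T) f (alpha : R) :
  measurable A -> measurable_fun A f -> 0 <= alpha ->
  `|cond_exp P A f| <= alpha / fine (P A) -> `|\int[P]_(t in A) f t| <= alpha.
Proof.
move=> mA mf alpha_ge0; rewrite /cond_exp -/(Rintegral P A f).
have PA_fin : P A \is a fin_num.
  by rewrite ge0_fin_numE // (le_lt_trans (probability_le1 P mA)) ?ltry.
have [PA0|PA_neq0] := eqVneq (fine (P A)) 0.
  (* The hypothesis degenerates to 0 <= 0 (division by 0 is 0), but A is null. *)
  have -> : \int[P]_(t in A) f t = 0.
    rewrite /Rintegral null_set_integral //; first exact/measurable_EFinP.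
    by apply/eqP; rewrite -fine_eq0 // PA0.
  by rewrite normr0.
have PA_gt0 : 0 < fine (P A) by rewrite lt0r PA_neq0 fine_ge0.
by rewrite normrM normfV (gtr0_norm PA_gt0) ler_pM2r ?invr_gt0.
Qed.

Lemma integral_dotv (m : nat) (u v : T -> 'rV[R]_m) :
  (forall i, bounded_measurable (fun t => u t 0 i)) ->
  (forall i, bounded_measurable (fun t => v t 0 i)) ->
  (\int[P]_t (dotv (u t) (v t))%:E)%E = (\sum_i \int[P]_t (u t 0 i * v t 0 i))%:E.
Proof.
move=> bu bv; have buv i := bounded_measurableM (bu i) (bv i).
by rewrite /dotv integral_EFin_Rintegral ?Rintegral_sum //; exact: bounded_measurable_sum.
Qed.

Section Partition.
Variables (n : nat) (A : 'I_n -> set T).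
Hypothesis measurableA : forall k, measurable (A k).
Hypothesis coverA : forall t, exists k, A k t.
Hypothesis disjointA : forall k l, k != l -> A k `&` A l = set0.

Lemma normr_Rintegral_mul_le (c : 'I_n -> R) (p g : T -> R) (delta B alpha : R) :
  bounded_measurable p -> bounded_measurable g ->
  (forall k, `|c k| <= 1) -> (forall k t, A k t -> `|p t - c k| <= delta) ->
  (forall t, `|g t| <= B) -> (forall k, `|\int[P]_(t in A k) g t| <= alpha) ->
  `|\int[P]_t (p t * g t)| <= n%:R * alpha + delta * B.
Proof.
move=> bp bg c_le1 p_near_c gB g_le.
have bindic k := bounded_measurable_indic R (measurableA k).
pose r t := \sum_k (p t - c k) * g t * \1_(A k) t.
have br : bounded_measurable r.
  apply: bounded_measurable_sum => k; apply: bounded_measurableM (bindic k).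
  by apply: bounded_measurableM bg; exact/bounded_measurableB/bounded_measurable_cst.
have bstep k : bounded_measurable (fun t => g t * \1_(A k) t).
  exact: bounded_measurableM.
have bcstep k : bounded_measurable (fun t => c k * (g t * \1_(A k) t)).
  exact/bounded_measurableM/bstep/bounded_measurable_cst.
have pgE t : p t * g t = \sum_k c k * (g t * \1_(A k) t) + r t.
  have [k0 Ak0t] := coverA t.
  rewrite /r -big_split /= (eq_bigr (fun k => p t * g t * \1_(A k) t)).
    by rewrite (sum_indic_partition _ disjointA Ak0t).
  by move=> k _; ring.
rewrite (eq_Rintegral _ (g := fun t => \sum_k c k * (g t * \1_(A k) t) + r t));
  last by move=> t _; exact: pgE.
rewrite RintegralD //; last 2 first.
- exact/bounded_measurable_integrable/bounded_measurable_sum.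
- exact: bounded_measurable_integrable.
apply: le_trans (ler_normD _ _) (lerD _ _).
  rewrite Rintegral_sum //.
  apply: le_trans (ler_norm_sum _ _ _) _.
  apply: (@le_trans _ _ (\sum_(k < n) alpha)); last first.
    by rewrite sumr_const card_ord mulr_natl.
  apply: ler_sum => k _; rewrite RintegralZl //; last first.
    exact/bounded_measurable_integrable/bstep.
  by rewrite normrM -[leRHS]mul1r Rintegral_mul_indic ler_pM.
apply: normr_Rintegral_le br _ => t; have [k0 Ak0t] := coverA t.
rewrite /r (sum_indic_partition (fun k => (p t - c k) * g t) disjointA Ak0t).
by rewrite normrM ler_pM ?p_near_c.
Qed.

End Partition.
End ProbabilityIntegrals.

Lemma bucketing_error_sqrt (R : rcfType) (n : nat) (M alpha : R) :
  0 < M -> 0 <= alpha -> n%:R * Num.sqrt (alpha / M) = 1 ->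
  n%:R * alpha + Num.sqrt (alpha / M) / 2 * (2 * M) = 2 * Num.sqrt (alpha * M).
Proof.
move=> M_gt0 alpha_ge0 nw; set w := Num.sqrt (alpha / M) in nw *.
have alphaE : alpha = w ^+ 2 * M.
  by rewrite /w sqr_sqrtr ?divfK ?gt_eqF // divr_ge0 // ltW.
have sqrtE : Num.sqrt (alpha * M) = w * M.
  by rewrite alphaE -mulrA -expr2 sqrtrM ?sqr_ge0 // !sqrtr_sqr !ger0_norm ?sqrtr_ge0 ?ltW.
by rewrite sqrtE {1}alphaE expr2 !mulrA nw; field.
Qed.

Section Bucketing.
Variables (R : realType) (w : R) (n : nat) (tau : 'I_n -> set R).
Hypothesis tauB : is_bucketing w tau.

Lemma bucket_width_gt0 : 0 < w.
Proof. by case: tauB => nw _ _ _; have n_ge0 : 0 <= n%:R :> R by []; nra. Qed.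

Lemma measurable_bucket k : measurable (tau k).
Proof. by case: tauB => _ /(_ k)[oS Sc] _ _; exact: measurable_itv_sandwich oS Sc. Qed.

Lemma bucket_cover u : 0 <= u <= 1 -> exists k, tau k u.
Proof.
case: tauB => _ _ _ cover u01.
have [k _ tau_k_u] : (\bigcup_(k in [set: 'I_n]) tau k) u by rewrite cover.
by exists k.
Qed.

Definition bucket_center (k : 'I_n) : R := (k%:R + 2^-1) * w.

Lemma normr_bucket_center_le1 k : `|bucket_center k| <= 1.
Proof.
case: tauB => nw _ _ _; have w_gt0 := bucket_width_gt0.
have kn : k.+1%:R <= n%:R :> R by rewrite ler_nat.
have k_ge0 : 0 <= k%:R :> R by [].
rewrite -natr1 in kn; rewrite /bucket_center ger0_norm; nra.
Qed.

Lemma bucket_dist_center k u : tau k u -> `|u - bucket_center k| <= w / 2.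
Proof.
move=> tau_k_u; case: tauB => _ /(_ k)[_ /(_ u tau_k_u) /andP[lo hi]] _ _.
by rewrite -natr1 in hi; rewrite ler_norml /bucket_center; apply/andP; split; lra.
Qed.

Lemma normr_Rintegral_mul_bucketing d (T : measurableType d) (P : probability T R)
    (p g : T -> R) (B alpha : R) :
  bounded_measurable p -> bounded_measurable g ->
  (forall t, 0 <= p t <= 1) -> (forall t, `|g t| <= B) ->
  (forall k, `|\int[P]_(t in p @^-1` tau k) g t| <= alpha) ->
  `|\int[P]_t (p t * g t)| <= n%:R * alpha + w / 2 * B.
Proof.
move=> bp bg p01; apply: (normr_Rintegral_mul_le (A := fun k => p @^-1` tau k)) => //.
- by move=> k; apply: measurable_preimageT bp.1 (measurable_bucket k).
- by move=> t; exact: bucket_cover.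
- by case: tauB => _ _ disj _ k l /disj kl; rewrite -preimage_setI kl preimage_set0.
- exact: normr_bucket_center_le1.
- by move=> k t; exact: bucket_dist_center.
Qed.

End Bucketing.

Theorem lemma3 (R : realType) (dT : measure_display) (T : measurableType dT)
  (P : probability T R) (X : Type) (d : nat)
  (xf : T -> X) (yf : T -> 'rV[R]_d)
  (Y Omega : set 'rV[R]_d) (M alpha : R) (n : nat) (tau : 'I_n -> set R)
  (pi h : X -> 'rV[R]_d) :
  (forall v, Y v -> forall i : 'I_d, `|v 0 i| <= M) ->
  (forall t, Y (yf t)) ->
  (forall v, Omega v -> forall i : 'I_d, 0 <= v 0 i <= 1) ->
  (forall x, Omega (pi x)) ->
  (forall x, Y (h x)) ->
  0 < M -> 0 < alpha ->
  is_bucketing (Num.sqrt (alpha / M)) tau ->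
  (forall i : 'I_d, measurable_fun setT (fun t => pi (xf t) 0 i)) ->
  (forall i : 'I_d, measurable_fun setT (fun t => h (xf t) 0 i)) ->
  (forall i : 'I_d, measurable_fun setT (fun t => yf t 0 i)) ->
  alpha_consistent P xf yf h alpha (level_sets tau pi) ->
  (`| \int[P]_t (dotv (pi (xf t)) (h (xf t)))%:E
      - \int[P]_t (dotv (pi (xf t)) (yf t))%:E |
    <= (2 * d%:R * Num.sqrt (alpha * M))%:E)%E.
Proof.
move=> YM Yy Omega01 Omega_pi Yh M_gt0 alpha_gt0 tauB mpi mh my consistent.
have bpi i : bounded_measurable (fun t => pi (xf t) 0 i).
  split=> //; exists 1 => t.
  by have /andP[? ?] := Omega01 _ (Omega_pi (xf t)) i; rewrite ger0_norm.
have bh i : bounded_measurable (fun t => h (xf t) 0 i).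
  by split=> //; exists M => t; exact: YM.
have byf i : bounded_measurable (fun t => yf t 0 i).
  by split=> //; exists M => t; exact: YM.
have coord i : `|\int[P]_t (pi (xf t) 0 i * h (xf t) 0 i)
    - \int[P]_t (pi (xf t) 0 i * yf t 0 i)| <= 2 * Num.sqrt (alpha * M).
  rewrite distrC -RintegralB //; last 2 first.
  - exact/bounded_measurable_integrable/bounded_measurableM.
  - exact/bounded_measurable_integrable/bounded_measurableM.
  under eq_Rintegral do rewrite -mulrBr.
  case: (tauB) => nw _ _ _; rewrite -(bucketing_error_sqrt M_gt0 (ltW alpha_gt0) nw).
  apply: (normr_Rintegral_mul_bucketing tauB (bpi i) (bounded_measurableB (byf i) (bh i))).
  - by move=> t; exact: Omega01 _ (Omega_pi (xf t)) i.
  - move=> t; apply: le_trans (ler_normB _ _) _.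
    by rewrite mulr2n mulrDl mul1r lerD ?YM.
  - move=> k; apply: normr_Rintegral_le_of_cond_exp (ltW alpha_gt0) (consistent [set x | tau k (pi x 0 i)] _ i).
    + exact: measurable_preimageT (mpi i) (measurable_bucket tauB k).
    + exact/measurable_funTS/measurable_funB.
    + by exists i, k.
rewrite !integral_dotv // -EFinB abse_EFin lee_fin -sumrB.
apply: le_trans (ler_norm_sum _ _ _) _; apply: le_trans (ler_sum _ (fun i _ => coord i)) _.
by rewrite sumr_const card_ord -[_ *+ d]mulr_natl mulrCA mulrA.
Qed.
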